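(* Let $g:\mathbb{R}\to\mathbb{R}$ be even and $\pi$-periodic. Let $m,n$ be positive integers, $p=\gcd(m,n)$, $r=n/p$, $\mu=\pi/n$, and $h(x)=\prod_{j=0}^{r-1} g(x+jm\mu)$. For $l\in\{0,\dots,p-1\}$ let $\lambda_l(x)=\prod_{k=1}^{p-l} h\big(x+(k-1)\mu\big)$ and $\delta_l=(p-l-1)\mu$. Then for all $x\in\mathbb{R}$, $$\lambda_l(x-\delta_l)=h\big(x-(p-l-1)\mu\big)\,h\big(x-(p-l-2)\mu\big)\cdots h(x)\quad\text{and}\quad\lambda_l(x-\delta_l)=\lambda_l(-x).$$ *)

From Stdlib Require Import Reals Lra Lia Arith.
Open Scope R_scope.

Fixpoint prodR (n : nat) (f : nat -> R) : R :=
  match n with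
  | O => 1
  | S k => prodR k f * f k
  end.

Definition mu (n : nat) : R := PI / INR n.

Definition h_fun (g : R -> R) (m n : nat) (x : R) : R :=
  prodR (n / Nat.gcd m n) (fun j => g (x + INR j * INR m * mu n)).

Definition lambda_fun (g : R -> R) (m n l : nat) (x : R) : R :=
  prodR (Nat.gcd m n - l) (fun k => h_fun g m n (x + INR k * mu n)).

Definition delta (m n l : nat) : R := INR (Nat.gcd m n - l - 1) * mu n.

(* Since [r m mu = (m / p) pi] is a multiple of [pi], the factors of [h] are [g] sampled
   along one full period in steps of [m mu]; reflecting [x] into [-x] only permutes these
   samples (evenness plus periodicity), so [h] is even.  The first identity is a
   reindexing of [lambda_l], and the second follows by reversing the product and using
   the evenness of [h] factorwise. *)

From Stdlib Require Import Reals Lia.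
Open Scope R_scope.

Lemma prodR_ext n f f' :
  (forall i, (i < n)%nat -> f i = f' i) -> prodR n f = prodR n f'.
Proof.
  induction n as [|n IH]; intros Hff'; simpl; [reflexivity|].
  rewrite IH by (intros; apply Hff'; lia).
  now rewrite Hff' by lia.
Qed.

Lemma prodR_succ_l n f : prodR (S n) f = f 0%nat * prodR n (fun j => f (S j)).
Proof.
  induction n as [|n IH]; simpl in *; [ring|].
  rewrite IH; ring.
Qed.

Lemma prodR_rev n f : prodR n f = prodR n (fun i => f (n - 1 - i)%nat).
Proof.
  induction n as [|n IH]; [reflexivity|].
  rewrite (prodR_succ_l n (fun i => f (S n - 1 - i)%nat)); cbn [prodR].
  rewrite IH, Rmult_comm.
  replace (S n - 1 - 0)%nat with n by lia.
  f_equal; apply prodR_ext; intros i Hi; f_equal; lia.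
Qed.

Lemma prodR_rotate n f : f n = f 0%nat -> prodR n (fun j => f (S j)) = prodR n f.
Proof.
  destruct n as [|n]; intros Hn; [reflexivity|].
  rewrite (prodR_succ_l n f); cbn [prodR].
  rewrite Hn; ring.
Qed.

Lemma periodic_nat_mul (G : R -> R) (T : R) :
  (forall z, G (z + T) = G z) -> forall k z, G (z + INR k * T) = G z.
Proof.
  intros G_per k; induction k as [|k IH]; intros z.
  - simpl; f_equal; ring.
  - rewrite S_INR, <- (IH z), <- (G_per (z + INR k * T)).
    f_equal; ring.
Qed.

Lemma prodR_even_periodic_reflect (G : R -> R) (c : R) (r : nat) :
  (forall z, G (- z) = G z) -> (forall z, G (z + INR r * c) = G z) ->
  forall y, prodR r (fun j => G (- y + INR j * c)) = prodR r (fun j => G (y + INR j * c)).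
Proof.
  intros G_even G_per y.
  rewrite <- (prodR_rotate r (fun j => G (y + INR j * c))) by (simpl; rewrite G_per; f_equal; ring).
  rewrite prodR_rev; apply prodR_ext; intros i Hi.
  rewrite <- G_even, <- G_per; f_equal.
  rewrite S_INR, !minus_INR by lia; simpl; ring.
Qed.

Lemma prodR_translate_reindex (H : R -> R) (c x : R) (q : nat) :
  prodR q (fun k => H (x - INR (q - 1) * c + INR k * c))
  = prodR q (fun i => H (x - INR (q - 1 - i) * c)).
Proof.
  apply prodR_ext; intros i Hi; f_equal.
  rewrite (minus_INR (q - 1) i) by lia; ring.
Qed.

Lemma prodR_even_reflect (H : R -> R) (c x : R) (q : nat) :
  (forall z, H (- z) = H z) ->
  prodR q (fun k => H (- x + INR k * c)) = prodR q (fun i => H (x - INR (q - 1 - i) * c)).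
Proof.
  intros H_even; rewrite prodR_rev; apply prodR_ext; intros i _.
  rewrite <- H_even; f_equal; ring.
Qed.

Lemma gcd_orbit_length m n : (0 < n)%nat ->
  INR (n / Nat.gcd m n) * (INR m * mu n) = INR (m / Nat.gcd m n) * PI.
Proof.
  intros hn.
  assert (p_neq0 : Nat.gcd m n <> 0%nat) by (intros E; apply Nat.gcd_eq_0 in E; lia).
  destruct (Nat.gcd_divide_l m n) as [a Ha], (Nat.gcd_divide_r m n) as [b Hb].
  set (p := Nat.gcd m n) in *.
  assert (b_neq0 : b <> 0%nat) by (intros ->; simpl in Hb; lia).
  assert (m_div_p : (m / p = a)%nat) by (rewrite Ha; exact (Nat.div_mul a p p_neq0)).
  assert (n_div_p : (n / p = b)%nat) by (rewrite Hb; exact (Nat.div_mul b p p_neq0)).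
  rewrite m_div_p, n_div_p.
  unfold mu; rewrite Ha, Hb, !mult_INR.
  field; split; apply not_0_INR; assumption.
Qed.

Lemma h_fun_even (g : R -> R) (m n : nat) :
  (forall x, g (- x) = g x) -> (forall x, g (x + PI) = g x) -> (0 < n)%nat ->
  forall y, h_fun g m n (- y) = h_fun g m n y.
Proof.
  intros g_even g_per hn y; unfold h_fun.
  assert (regroup : forall z, prodR (n / Nat.gcd m n) (fun j => g (z + INR j * INR m * mu n))
                     = prodR (n / Nat.gcd m n) (fun j => g (z + INR j * (INR m * mu n)))).
  { intros z; apply prodR_ext; intros; now rewrite Rmult_assoc. }
  rewrite !regroup.
  apply prodR_even_periodic_reflect; [exact g_even|].
  intros z; rewrite gcd_orbit_length by exact hn.
  exact (periodic_nat_mul g PI g_per _ z).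
Qed.

Theorem corollaryA6 (g : R -> R)
  (g_even : forall x, g (- x) = g x)
  (g_per : forall x, g (x + PI) = g x)
  (m n : nat) (hm : (0 < m)%nat) (hn : (0 < n)%nat)
  (l : nat) (hl : (l < Nat.gcd m n)%nat) :
  forall x : R,
    lambda_fun g m n l (x - delta m n l)
      = prodR (Nat.gcd m n - l)
          (fun i => h_fun g m n (x - INR (Nat.gcd m n - l - 1 - i) * mu n))
    /\ lambda_fun g m n l (x - delta m n l) = lambda_fun g m n l (- x).
Proof.
  intros x; unfold lambda_fun, delta.
  rewrite prodR_translate_reindex.
  split; [reflexivity|].
  symmetry; apply prodR_even_reflect.
  exact (h_fun_even g m n g_even g_per hn).
Qed.
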